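(* Let $\mathcal L$ be a finite relational language, let $E\notin\mathcal L$ be the binary predicate symbol of $T_{\mathrm{Graph}}$, let $J\colon T_{\mathcal L}\leadsto T_{\mathrm{Graph}}\cup T_{\mathcal L}$ be the structure-erasing interpretation (so $J(M)$ is the $\mathcal L$-reduct of $M$), let $\mathcal F$ be a family of models of $T_{\mathrm{Graph}}\cup T_{\mathcal L}$, and let $I\colon T_{\mathrm{Graph}}\leadsto\mathrm{Forb}_{T_{\mathrm{Graph}}\cup T_{\mathcal L}}(\mathcal F\!\uparrow^E)$ act identically on $E$. Then $$\chi(I)=\inf\{\ell\in\mathbb{N}_+:\mathcal P_{\ell,\mathcal L}\subseteq\chi^E_\ell(\mathcal F)\}$$ (with $\inf\varnothing=\infty$). Furthermore, $\chi(I)<\infty$ if and only if $\mathcal P_{1,\mathcal L}\subseteq\mathcal U_1(J(\mathcal F))$, where $J(\mathcal F)=\{J(F):F\in\mathcal F\}$.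
   Context: Structures are finite and canonical (no predicate holds on a tuple with a repeated entry); $V(M)$ is the vertex set, $(V)_k$ the set of injective maps $[k]\to V$, $R_P(M)\subseteq(V(M))_{k(P)}$ the tuples satisfying $P$. $T_{\mathcal L}$: all canonical $\mathcal L$-structures; $T_{\mathrm{Graph}}$: simple graphs over $\{E\}$; models of $T_{\mathrm{Graph}}\cup T_{\mathcal L}$ are graphs with an arbitrary canonical $\mathcal L$-structure on the same vertex set. $\mathcal F\!\uparrow^E$: all models $F'$ of $T_{\mathrm{Graph}}\cup T_{\mathcal L}$ such that for some $F\in\mathcal F$, $V(F')=V(F)$, $R_E(F')\supseteq R_E(F)$, $R_P(F')=R_P(F)$ for $P\in\mathcal L$. $\mathrm{Forb}_T(\mathcal G)$: models of $T$ with no induced substructure isomorphic to a member of $\mathcal G$. $I$ acts identically on $E$, so $I(M)$ is the graph part of $M$. $\chi(I)=\sup(\{\ell\in\mathbb{N}_+:\forall n\ \exists N\in\mathcal M_n[T],\ T_{n,\ell}\subseteq I(N)\}\cup\{0\})+1$, with $\mathcal M_n[T]$ the $n$-vertex models up to isomorphism, $T_{n,\ell}$ the balanced complete $\ell$-partite graph on $n$ vertices, and $G\subseteq H$ meaning an injection mapping edges to edges. An $\ell$-split order over $V$ is $(f,\preceq)$ with $f\colon V\to[\ell]$ and $\preceq$ a reflexive partial order such that $v,w$ are comparable iff $f(v)=f(w)$; $\mathcal S_{\ell,V}$ is the set of these, $\mathcal S_{\ell,k}=\mathcal S_{\ell,[k]}$. For an injection $g$, $w_1\preceq_g w_2\iff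 g(w_1)\preceq g(w_2)$. An $\ell$-Ramsey pattern on $\mathcal L$ is $Q\colon P\mapsto Q_P\subseteq\mathcal S_{\ell,k(P)}$ ($P\in\mathcal L$); $\mathcal P_{\ell,\mathcal L}$ is the set of these. An $\mathcal L$-structure $K$ is $Q$-uniform w.r.t. $(f,\preceq)\in\mathcal S_{\ell,V(K)}$ if $R_P(K)=\{\alpha\in(V(K))_{k(P)}:(f\circ\alpha,\preceq_\alpha)\in Q_P\}$ for all $P\in\mathcal L$; $\mathcal U_\ell(K)$ is the set of $Q$ for which $K$ is $Q$-uniform w.r.t. some $\ell$-split order on $V(K)$, and $\mathcal U_\ell$ of a family is the union. For a model $M$ of $T_{\mathrm{Graph}}\cup T_{\mathcal L}$ and $Q\in\mathcal P_{\ell,\mathcal L}$, an $E$-proper $Q$-split ordering of $M$ is $(f,\preceq)\in\mathcal S_{\ell,V(M)}$ such that $J(M)$ is $Q$-uniform w.r.t. $(f,\preceq)$ and $f$ is a proper coloring of the graph part of $M$. $\chi^E_\ell(M)$ is the set of $Q\in\mathcal P_{\ell,\mathcal L}$ such that $M$ has an $E$-proper $Q$-split ordering, and $\chi^E_\ell(\mathcal F)=\bigcup_{M\in\mathcal F}\chi^E_\ell(M)$. *)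

From mathcomp Require Import all_boot.
Unset Printing Implicit Defensive.

(** A finite relational language: a finite type [L] of predicate symbols
    with arities [k : L -> nat]. *)

Record Lstruct (L : finType) (k : L -> nat) := LS {
  lnv : nat;
  lrels : forall P : L, {set {ffun 'I_(k P) -> 'I_lnv}} }.
Arguments Lstruct {L} k.
Arguments lnv {L k} _.
Arguments lrels {L k} _ P.
Arguments LS {L k} lnv lrels.

(** Structures over L + {E} (E is the graph edge predicate, not in L). *)
Record GLstruct (L : finType) (k : L -> nat) := GLS {
  nv : nat;
  edge : rel 'I_nv;
  rels : forall P : L, {set {ffun 'I_(k P) -> 'I_nv}} }.
Arguments GLstruct {L} k.
Arguments nv {L k} _.
Arguments edge {L k} _ _ _.
Arguments rels {L k} _ P.
Arguments GLS {L k} nv edge rels.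

Definition tcomp {m n j : nat} (f : 'I_m -> 'I_n) (a : {ffun 'I_j -> 'I_m})
  : {ffun 'I_j -> 'I_n} := [ffun i => f (a i)].

Definition is_canonical {L : finType} {k : L -> nat} (M : GLstruct k) : Prop :=
  forall (P : L) (a : {ffun 'I_(k P) -> 'I_(nv M)}), a \in rels M P -> injective a.

Definition is_model {L : finType} {k : L -> nat} (M : GLstruct k) : Prop :=
  [/\ symmetric (edge M), irreflexive (edge M) & is_canonical M].

Definition J {L : finType} {k : L -> nat} (M : GLstruct k) : Lstruct k := LS (nv M) (rels M).

Definition induced_copy {L : finType} {k : L -> nat} (G M : GLstruct k) : Prop :=
  exists f : 'I_(nv G) -> 'I_(nv M),
    [/\ injective f,
        forall x y, edge G x y = edge M (f x) (f y)
      & forall (P : L) (a : {ffun 'I_(k P) -> 'I_(nv G)}),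
          (a \in rels G P) = (tcomp f a \in rels M P)].

(** F' ∈ F↑E : F' is a model with V(F') = V(F) (transport along nv F = nv F'),
    more edges, same L-relations, for some F in the family. *)
Definition upE {L : finType} {k : L -> nat} (fam : GLstruct k -> Prop) (F' : GLstruct k) : Prop :=
  is_model F' /\
  exists F, fam F /\ exists e : nv F = nv F',
    (forall x y, edge F x y -> edge F' (cast_ord e x) (cast_ord e y)) /\
    (forall (P : L) (a : {ffun 'I_(k P) -> 'I_(nv F)}),
        (a \in rels F P) = (tcomp (cast_ord e) a \in rels F' P)).

Definition Forb {L : finType} {k : L -> nat} (fam : GLstruct k -> Prop) (M : GLstruct k) : Prop :=
  is_model M /\ ~ (exists G, upE fam G /\ induced_copy G M).

(** balanced complete l-partite graph on n vertices (parts = residues mod l) *)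
Definition Tnl (n l : nat) : rel 'I_n := fun x y => (x %% l) != (y %% l).

Definition subgraph_of {L : finType} {k : L -> nat} {n : nat} (G : rel 'I_n) (M : GLstruct k) : Prop :=
  exists f : 'I_n -> 'I_(nv M), injective f /\ forall x y, G x y -> edge M (f x) (f y).


(** the set whose sup (with 0) plus one is χ(I), I the interpretation acting
    identically on E, T = Forb(F↑E). *)
Definition chiA {L : finType} {k : L -> nat} (fam : GLstruct k -> Prop) (l : nat) : Prop :=
  0 < l /\ forall n, exists N, [/\ Forb fam N, nv N = n & subgraph_of (Tnl n l) N].

(** chi_val fam x : χ(I) = x, where None stands for ∞. *)
Definition chi_val {L : finType} {k : L -> nat} (fam : GLstruct k -> Prop) (x : option nat) : Prop :=
  match x with
  | Some m => exists s, [/\ m = s.+1, (forall l, chiA fam l -> l <= s) & (s = 0 \/ chiA fam s)]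
  | None => forall s, exists l, chiA fam l /\ s < l
  end.

(** inf_val B x : inf B = x (None = ∞ = inf of the empty set). *)
Definition inf_val (B : nat -> Prop) (x : option nat) : Prop :=
  match x with
  | Some m => B m /\ forall l, B l -> m <= l
  | None => forall l, ~ B l
  end.

(** Candidate l-split orders over V : pairs (f, ≼) with ≼ as a boolean relation. *)
Definition sord (V : finType) (l : nat) := ({ffun V -> 'I_l} * {ffun V * V -> bool})%type.

Definition is_split {V : finType} {l : nat} (so : sord V l) : Prop :=
  let f := so.1 in let r := so.2 in
  [/\ forall v, r (v, v),
      forall v w, r (v, w) -> r (w, v) -> v = w,
      forall u v w, r (u, v) -> r (v, w) -> r (u, w)
    & forall v w, (r (v, w) || r (w, v)) = (f v == f w)].

Definition pullback {V : finType} {l j : nat} (so : sord V l) (a : {ffun 'I_j -> V})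
  : sord 'I_j l :=
  ([ffun i => so.1 (a i)], [ffun p => so.2 (a p.1, a p.2)]).

Definition pattern {L : finType} (k : L -> nat) (l : nat) :=
  forall P : L, {set sord 'I_(k P) l}.

Definition is_pattern {L : finType} {k : L -> nat} {l : nat} (Q : pattern k l) : Prop :=
  forall (P : L) q, q \in Q P -> is_split q.

Definition uniform {L : finType} {k : L -> nat} {l : nat} (K : Lstruct k) (Q : pattern k l)
  (so : sord 'I_(lnv K) l) : Prop :=
  forall (P : L) (a : {ffun 'I_(k P) -> 'I_(lnv K)}),
    a \in lrels K P <-> (injective a /\ pullback so a \in Q P).

Definition E_proper {L : finType} {k : L -> nat} {l : nat} (M : GLstruct k) (Q : pattern k l)
  (so : sord 'I_(nv M) l) : Prop :=
  [/\ is_split so, uniform (J M) Q so & forall x y, edge M x y -> so.1 x != so.1 y].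

Definition chiE {L : finType} {k : L -> nat} (fam : GLstruct k -> Prop) (l : nat) (Q : pattern k l) : Prop :=
  exists M, fam M /\ exists so : sord 'I_(nv M) l, E_proper M Q so.

Definition chiB {L : finType} {k : L -> nat} (fam : GLstruct k -> Prop) (l : nat) : Prop :=
  0 < l /\ forall Q : pattern k l, is_pattern Q -> chiE fam l Q.

Definition U {L : finType} {k : L -> nat} (l : nat) (famL : Lstruct k -> Prop) (Q : pattern k l) : Prop :=
  exists K, famL K /\ exists so : sord 'I_(lnv K) l, is_split so /\ uniform K Q so.

Definition Jfam {L : finType} {k : L -> nat} (fam : GLstruct k -> Prop) : Lstruct k -> Prop :=
  fun K => exists F, fam F /\ K = J F.

From mathcomp Require Import all_boot.
From mathcomp Require Import zify.
From Stdlib Require Import Classical.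
From Stdlib Require Wf_nat.
Set Implicit Arguments. Unset Strict Implicit. Unset Printing Implicit Defensive.

(** Write [chiA l] for "[l ≥ 1] and [T_{n,l}] lies in an [F↑E]-free model for
    every [n]" and [chiB l] for "every [l]-pattern is realised E-properly in
    the family".  The heart of the proof is the threshold
    [chiA l <-> l ≥ 1 /\ ~ chiB l]:
    - if an [l]-pattern [Q] is missing, the [Q]-uniform structure on
      [T_{n,l}] (ordered by residues mod [l]) is [F↑E]-free, since an induced
      copy of a member of [F↑E] is a weak embedding of some [F] (edges
      preserved, relations preserved and reflected), along which the order
      pulls back to an E-proper [Q]-ordering of [F];
    - if all [l]-patterns are realised, Ramsey's theorem for K-subsets finds,
      in a model containing a large [T_{n,l}], a homogeneous set of blocks on
      which a realisation of the pattern read off from its colour embeds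
      weakly; tuples are located there through the keys of a split order,
      which encode its lexicographic order.
    Since [chiB] is upward closed (add an unused colour), [χ(I) = sup chiA + 1]
    equals [inf chiB] by order bookkeeping.  For the second claim, [chiB l]
    yields all 1-patterns by collapsing an order to its lexicographic order;
    conversely a second Ramsey argument, giving every vertex its own colour,
    turns uniform realisations of all 1-patterns into E-proper realisations
    of all [(N+1)]-patterns. *)

Lemma finite_common_bound (C : finType) (P : C -> nat -> Prop) :
  (forall c N N', N <= N' -> P c N -> P c N') ->
  (forall c, exists N, P c N) -> exists N, forall c, P c N.
Proof.
move=> mono ex.
suff [N HN] : exists N, forall c, c \in enum C -> P c N.
  by exists N => c; apply: HN; rewrite mem_enum.
elim: (enum C) => [|c s [N HN]]; first by exists 0.
have [Nc HNc] := ex c.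
exists (maxn N Nc) => c'; rewrite inE => /orP [/eqP ->|Hc'].
  exact: mono (leq_maxr _ _) HNc.
exact: mono (leq_maxl _ _) (HN _ Hc').
Qed.

Lemma least_witness (P : nat -> Prop) l :
  P l -> exists m, P m /\ forall l', P l' -> m <= l'.
Proof.
move=> Pl.
have [m [[Pm least] _]] :=
  Wf_nat.dec_inh_nat_subset_has_unique_least_element P (fun n => classic (P n))
    (ex_intro _ l Pl).
by exists m; split => // l' /least /leP.
Qed.

(** * Ramsey's theorem for K-element subsequences *)

Definition homog (C : Type) (col : seq nat -> C) K H c0 :=
  forall T, subseq T H -> size T = K -> col T = c0.

Definition RamseyP (C : finType) K (t : C -> nat) N :=
  forall (A : seq nat) (col : seq nat -> C), N <= size A ->
    exists c0 H, [/\ subseq H A, size H = t c0 & homog col K H c0].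

Lemma RamseyP_mono (C : finType) K (t : C -> nat) N N' :
  N <= N' -> RamseyP K t N -> RamseyP K t N'.
Proof. by move=> le HP A col HA; apply: HP; apply: leq_trans HA. Qed.

Lemma ramsey0 (C : finType) m : exists N, RamseyP 0 (fun _ : C => m) N.
Proof.
exists m => A col HA; exists (col [::]), (take m A); split.
- exact: take_subseq.
- by rewrite size_takel.
- by move=> T _ /size0nil ->.
Qed.

Lemma ramsey_target0 (C : finType) K (t : C -> nat) c0 :
  t c0 = 0 -> RamseyP K.+1 t 0.
Proof.
by move=> t0 A col _; exists c0, [::]; rewrite sub0seq t0; split=> // T /eqP ->.
Qed.

(** The Erdős–Rado step: take the first element [x] of [A]; colour the
    K-subsets of the rest by the colour of their extension by [x]; a large
    homogeneous set [H1] for that colouring (colour [d]) contains a set [H2]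
    homogeneous for the original colouring with target lowered at [d].
    If [H2] has colour [d], then [x :: H2] is [d]-homogeneous. *)
Lemma ramsey_extend (C : finType) K (t : C -> nat) N' R :
  (forall c, 0 < t c) ->
  RamseyP K (fun _ : C => N') R ->
  (forall d, RamseyP K.+1 (fun c => if c == d then (t c).-1 else t c) N') ->
  RamseyP K.+1 t R.+1.
Proof.
move=> tpos HR HN' [//|x A'] col /= HA.
have [d [H1 [s1 sz1 hom1]]] := HR A' (fun T => col (x :: T)) HA.
have [d' [H2 [s2 sz2 hom2]]] := HN' d H1 col (eq_leq (esym sz1)).
have s2A : subseq H2 A' := subseq_trans s2 s1.
case: (eqVneq d' d) => [eqd|ne]; last first.
  exists d', H2; split => //; last by rewrite sz2 (negbTE ne).
  exact: subseq_trans s2A (subseq_cons _ _).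
subst d'; exists d, (x :: H2); split.
- by rewrite /= eqxx.
- by rewrite /= sz2 eqxx prednK.
- case=> [|y T'] //= sub [szT]; move: sub; case: eqP => [-> sub|_ sub].
    exact: hom1 (subseq_trans sub s2) szT.
  by apply: hom2 => //=; rewrite szT.
Qed.

Lemma ramsey_targets (C : finType) K :
  (forall m, exists N, RamseyP K (fun _ : C => m) N) ->
  forall s (t : C -> nat), \sum_c t c <= s -> exists N, RamseyP K.+1 t N.
Proof.
move=> IHK; elim=> [|s IHs] t Ht.
  case: (pickP (fun c => t c == 0)) => [c0 /eqP t0|tpos].
    by exists 0; apply: ramsey_target0 t0.
  exists 0 => A col _; move: Ht (tpos (col [::])).
  by rewrite (bigD1 (col [::])) //=; lia.
case: (pickP (fun c => t c == 0)) => [c0 /eqP t0|tpos].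
  by exists 0; apply: ramsey_target0 t0.
have tpos' c : 0 < t c by rewrite lt0n; apply/negbT/tpos.
pose t' d c := if c == d then (t c).-1 else t c.
have Ht' d : \sum_c t' d c <= s.
  move: Ht; rewrite (bigD1 d (F := t)) // (bigD1 d (F := t' d)) //=.
  have -> : \sum_(c | c != d) t' d c = \sum_(c | c != d) t c.
    by apply: eq_bigr => c /negbTE; rewrite /t' => ->.
  rewrite /t' eqxx; have := tpos' d; lia.
have [N' HN'] : exists N', forall d, RamseyP K.+1 (t' d) N'.
  apply: finite_common_bound => [c N1 N2|d]; [exact: RamseyP_mono | exact: IHs].
have [R HR] := IHK N'.
by exists R.+1; apply: ramsey_extend HR HN'.
Qed.

Lemma ramsey K (C : finType) m : exists N, RamseyP K (fun _ : C => m) N.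
Proof.
elim: K m => [|K IH] m; first exact: ramsey0.
exact: (ramsey_targets IH (leqnn _)).
Qed.

(** * Split orders *)

(** Boolean version of [is_split], needed to carve patterns out as finite sets. *)
Definition is_splitb (V : finType) l (q : sord V l) : bool :=
 [&& [forall v, q.2 (v, v)],
     [forall v, forall w, (q.2 (v, w) && q.2 (w, v)) ==> (v == w)],
     [forall u, forall v, forall w, (q.2 (u, v) && q.2 (v, w)) ==> q.2 (u, w)] &
     [forall v, forall w, (q.2 (v, w) || q.2 (w, v)) == (q.1 v == q.1 w)]].

Lemma is_splitP (V : finType) l (q : sord V l) : reflect (is_split q) (is_splitb q).
Proof.
apply: (iffP and4P) => [[/forallP h1 /forallP h2 /forallP h3 /forallP h4]|[h1 h2 h3 h4]].
  split => //.
  - by move=> v w r1 r2; have /forallP/(_ w)/implyP := h2 v; rewrite r1 r2 => /(_ isT)/eqP.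
  - move=> u v w r1 r2; have /forallP/(_ v)/forallP/(_ w)/implyP := h3 u.
    by rewrite r1 r2; apply.
  - by move=> v w; have /forallP/(_ w)/eqP := h4 v.
split; apply/forallP => v.
- exact: h1.
- by apply/forallP => w; apply/implyP => /andP [r1 r2]; apply/eqP; apply: h2.
- apply/forallP => w; apply/forallP => x; apply/implyP => /andP [r1 r2]; exact: h3 r1 r2.
- by apply/forallP => w; apply/eqP; apply: h4.
Qed.

Definition comp_so (V W : finType) l (so : sord W l) (g : V -> W) : sord V l :=
  ([ffun v => so.1 (g v)], [ffun p => so.2 (g p.1, g p.2)]).

Lemma comp_split (V W : finType) l (so : sord W l) (g : V -> W) :
  injective g -> is_split so -> is_split (comp_so so g).
Proof.
move=> ginj [h1 h2 h3 h4]; split; rewrite /comp_so /=.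
- by move=> v; rewrite !ffunE.
- by move=> v w; rewrite !ffunE => r1 r2; apply: ginj; apply: h2.
- by move=> u v w; rewrite !ffunE; apply: h3.
- by move=> v w; rewrite !ffunE h4.
Qed.

Lemma pullback_split (V : finType) l (so : sord V l) j (a : {ffun 'I_j -> V}) :
  injective a -> is_split so -> is_split (pullback so a).
Proof. exact: (@comp_split _ _ _ so a). Qed.

Lemma pullback_comp (m n l j : nat) (so : sord 'I_n l) (g : 'I_m -> 'I_n)
    (a : {ffun 'I_j -> 'I_m}) :
  pullback (comp_so so g) a = pullback so (tcomp g a).
Proof. by congr pair; apply/ffunP => x; rewrite !ffunE. Qed.

Lemma tcomp_inj (m n j : nat) (f : 'I_m -> 'I_n) (a : {ffun 'I_j -> 'I_m}) :
  injective f -> injective a -> injective (tcomp f a).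
Proof. by move=> fi ai x y; rewrite !ffunE => /fi /ai. Qed.

Lemma tcomp_inj_inv (m n j : nat) (f : 'I_m -> 'I_n) (a : {ffun 'I_j -> 'I_m}) :
  injective (tcomp f a) -> injective a.
Proof. by move=> h x y e; apply: h; rewrite !ffunE e. Qed.

Lemma tcomp_comp (m n p j : nat) (f : 'I_m -> 'I_n) (g : 'I_n -> 'I_p)
    (a : {ffun 'I_j -> 'I_m}) :
  tcomp g (tcomp f a) = tcomp (fun x => g (f x)) a.
Proof. by apply/ffunP => x; rewrite !ffunE. Qed.

Lemma tcomp_id (n j : nat) (a : {ffun 'I_j -> 'I_n}) :
  tcomp (cast_ord (erefl n)) a = a.
Proof. by apply/ffunP => x; rewrite ffunE cast_ord_id. Qed.

Definition lexlt (V : finType) l (q : sord V l) (u v : V) : bool :=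
  (q.1 u < q.1 v) || [&& q.1 u == q.1 v, q.2 (u, v) & u != v].

Definition lexr (V : finType) l (q : sord V l) (v : V) : nat :=
  #|[set u | lexlt q u v]|.

Lemma lexr_lt j l (q : sord 'I_j l) (i : 'I_j) : lexr q i < j.
Proof.
rewrite -[j in _ < j]card_ord -cardsT; apply: proper_card; apply/properP.
by split; [exact: subsetT | exists i; rewrite !inE /lexlt ?eqxx // ltnn !andbF].
Qed.

Lemma lexlt_pullback (V : finType) l (so : sord V l) j (a : {ffun 'I_j -> V}) :
  injective a -> forall i i', lexlt (pullback so a) i' i = lexlt so (a i') (a i).
Proof. by move=> ai i i'; rewrite /lexlt !ffunE (inj_eq ai). Qed.

(** When all colour classes of [so] have at most [m] elements, the key
   [colour * m + (position in the chain)] is an injection into [[0, l*m)]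
   that realises the lexicographic order. *)
Section Key.
Variables (V : finType) (l m : nat) (so : sord V l).
Hypothesis Hs : is_split so.
Hypothesis Hm : forall c, #|[set u | so.1 u == c]| <= m.

Definition chain_rank (v : V) : nat := #|[set u | so.2 (u, v) && (u != v)]|.
Definition key (v : V) : nat := so.1 v * m + chain_rank v.

Lemma split_cmp u v : so.1 u = so.1 v -> so.2 (u, v) || so.2 (v, u).
Proof. by case: Hs => _ _ _ h e; rewrite h e eqxx. Qed.

Lemma split_col u v : so.2 (u, v) -> so.1 u = so.1 v.
Proof. by case: Hs => _ _ _ h r; apply/eqP; rewrite -h r. Qed.

Lemma chain_rank_lt u v : so.2 (u, v) -> u != v -> chain_rank u < chain_rank v.
Proof.
case: Hs => _ anti tr _ ruv nuv; apply: proper_card; apply/properP; split.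
  apply/subsetP => w; rewrite !inE => /andP [rwu nwu]; rewrite (tr _ _ _ rwu ruv) /=.
  by apply: contra nuv => /eqP ewv; subst w; apply/eqP; apply: anti.
by exists u; rewrite !inE ?ruv ?nuv // eqxx andbF.
Qed.

Lemma chain_rank_bound v : chain_rank v < m.
Proof.
apply: leq_trans (Hm (so.1 v)); apply: proper_card; apply/properP; split.
  apply/subsetP => w; rewrite !inE => /andP [rwv _]; apply/eqP; exact: split_col.
by exists v; rewrite !inE ?eqxx // andbF.
Qed.

Lemma key_bound v : key v < l * m.
Proof.
have := chain_rank_bound v; have := ltn_ord (so.1 v); rewrite /key => h1 h2.
by apply: (@leq_trans ((so.1 v).+1 * m)); [rewrite mulSn; lia | exact: leq_mul].
Qed.

(** Within a colour the chain rank is the chain order; across colours the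
    block [colour * m] dominates. *)
Lemma key_lt u v : (key u < key v) = lexlt so u v.
Proof.
have bu := chain_rank_bound u; have bv := chain_rank_bound v; rewrite /key /lexlt.
rewrite -[so.1 u == so.1 v]/(nat_of_ord (so.1 u) == nat_of_ord (so.1 v)).
case: (ltngtP (so.1 u) (so.1 v)) => [lt|gt|eq].
- apply/idP; apply: (@leq_trans ((so.1 u).+1 * m)); first by rewrite mulSn; lia.
  by apply: leq_trans (leq_addr _ _); apply: leq_mul.
- apply/negbTE; rewrite -leqNgt; apply: (@leq_trans ((so.1 v).+1 * m)).
    by rewrite mulSn; lia.
  by apply: leq_trans (leq_addr _ _); apply: leq_mul.
- have e : so.1 u = so.1 v by apply: val_inj.
  rewrite e /= ltn_add2l; apply/idP/idP => [lt|/andP [r n]]; last exact: chain_rank_lt.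
  have nuv : u != v by apply: contraTneq lt => ->; rewrite ltnn.
  rewrite nuv andbT; have /orP [//|rvu] := split_cmp e.
  by have := chain_rank_lt rvu; rewrite eq_sym nuv => /(_ isT); lia.
Qed.

Lemma key_inj : injective key.
Proof.
move=> u v ek; apply: contraTeq isT => nuv.
have := key_lt u v; have := key_lt v u.
rewrite ek ltnn /lexlt [v == u]eq_sym nuv !andbT.
case: (ltngtP (so.1 u) (so.1 v)) => // e.
have e' : so.1 u = so.1 v by apply: val_inj.
by have := split_cmp e'; rewrite e' eqxx /= => /orP [] ->.
Qed.

End Key.

Lemma sorted_subset_subseq (s1 s2 : seq nat) : sorted ltn s1 -> sorted ltn s2 ->
  {subset s1 <= s2} -> subseq s1 s2.
Proof.
elim: s2 s1 => [|y s2 IH] [|x s1] //=.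
  by move=> _ _ /(_ x); rewrite inE eqxx /= => /(_ isT).
move=> p1 p2 sub.
have ay := order_path_min ltn_trans p2; have ax := order_path_min ltn_trans p1.
have s1s2 z : z \in s1 -> z \in s2.
  move=> zs1; have xz : x < z by move/allP: ax => /(_ z zs1).
  have := sub z; rewrite !inE zs1 orbT => /(_ isT) /orP [/eqP ezy|//]; subst z.
  have := sub x; rewrite !inE eqxx => /(_ isT) /orP [/eqP exy|xs2]; first lia.
  by move/allP: ay => /(_ x xs2); lia.
case: eqP => [exy|nxy].
  by subst y; apply: IH; [exact: path_sorted p1 | exact: path_sorted p2 | ].
have xs2 : x \in s2 by have := sub x; rewrite !inE eqxx => /(_ isT) /orP [/eqP|].
apply: IH => //; first exact: path_sorted p2.
by move=> z; rewrite inE => /orP [/eqP ->|/s1s2].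
Qed.

Lemma nth_rank (s : seq nat) x : sorted ltn s -> x \in s ->
  nth 0 s (count (fun y => y < x) s) = x.
Proof.
elim: s => [|y s IH] //= p; have ay := order_path_min ltn_trans p.
rewrite inE => /orP [/eqP ->|xs].
  rewrite ltnn add0n (eq_in_count (a2 := pred0)) ?count_pred0 //.
  by move=> z zs /=; move/allP: ay => /(_ z zs) yz; rewrite ltnNge ltnW.
have -> : y < x by move/allP: ay => /(_ x xs).
by rewrite add1n /= IH //; exact: path_sorted p.
Qed.

Lemma nth_sorted_lt (H : seq nat) y z : sorted ltn H -> y < size H -> z < size H ->
  (nth 0 H y < nth 0 H z) = (y < z).
Proof.
move=> sH hy hz; have mono := sorted_ltn_nth ltn_trans 0 sH.
apply/idP/idP => [lt|yz]; last exact: mono.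
rewrite ltnNge; apply: contraTN lt; rewrite leq_eqVlt => /orP [/eqP ->|zy].
  by rewrite ltnn.
by rewrite -leqNgt ltnW // mono.
Qed.

Lemma sorted_pick_rank (H Ix : seq nat) : sorted ltn H -> uniq Ix ->
  (forall y, y \in Ix -> y < size H) ->
  exists T, [/\ subseq T H, size T = size Ix &
    forall y, y \in Ix -> nth 0 T (count (fun z => z < y) Ix) = nth 0 H y].
Proof.
move=> sH uIx IxH; pose T := sort leq [seq nth 0 H y | y <- Ix].
have nthlt y z : y \in Ix -> z \in Ix -> (nth 0 H y < nth 0 H z) = (y < z).
  by move=> yI zI; apply: nth_sorted_lt; [ | exact: IxH | exact: IxH].
have uT : uniq T.
  rewrite sort_uniq map_inj_in_uniq // => y z yI zI e.
  by case: (ltngtP y z) => // lt; move: lt; rewrite -nthlt // e ltnn.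
have sT : sorted ltn T by rewrite ltn_sorted_uniq_leq uT sort_sorted //; exact: leq_total.
exists T; split.
- apply: sorted_subset_subseq => // x; rewrite mem_sort => /mapP [y /IxH yI ->].
  exact: mem_nth.
- by rewrite size_sort size_map.
- move=> y yI; have yT : nth 0 H y \in T by rewrite mem_sort map_f.
  rewrite -[RHS](nth_rank sT yT) (permP (permEl (perm_sort leq _))) count_map.
  by congr nth; apply: eq_in_count => z zI /=; rewrite nthlt.
Qed.

(** A split order [so] with at most [m] vertices per colour is placed into a
   strictly increasing sequence [H] of length [l * m + K] through its keys.
   Any injective tuple [a] of arity at most [K] then lies in a K-element
   subsequence [T] of [H], at the indices given by its own lexicographic
   ranks: this is what lets the colour of [T] encode the tuple. *)
Section Positions.
Variables (V : finType) (l m K : nat) (so : sord V l) (H : seq nat).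
Hypotheses (Hs : is_split so) (Hm : forall c, #|[set u | so.1 u == c]| <= m).
Hypotheses (sH : sorted ltn H) (szH : size H = l * m + K).

Definition pos (u : V) : nat := nth 0 H (key m so u).

Lemma key_in_H u : key m so u < size H.
Proof. by rewrite szH; apply: leq_trans (key_bound Hs Hm u) _; exact: leq_addr. Qed.

Lemma pos_in_H u : pos u \in H.
Proof. exact/mem_nth/key_in_H. Qed.

Lemma pos_inj : injective pos.
Proof.
move=> u v e; apply: (key_inj Hs Hm).
case: (ltngtP (key m so u) (key m so v)) => // lt; move: lt.
  by rewrite -(nth_sorted_lt sH) ?key_in_H // -/(pos u) -/(pos v) e ltnn.
by rewrite -(nth_sorted_lt sH) ?key_in_H // -/(pos u) -/(pos v) e ltnn.
Qed.

Lemma pos_tuple j (a : {ffun 'I_j -> V}) : j <= K -> injective a ->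
  exists T, [/\ subseq T H, size T = K &
    forall i, nth 0 T (lexr (pullback so a) i) = pos (a i)].
Proof.
move=> jK ai; pose keys := [seq key m so (a i) | i <- enum 'I_j].
pose Ix := keys ++ iota (l * m + j) (K - j).
have keysI i : key m so (a i) \in Ix.
  by rewrite mem_cat (map_f (fun i => key m so (a i))) ?mem_enum.
have keyinj : injective (fun i => key m so (a i)) by move=> i i' /(key_inj Hs Hm) /ai.
have lowkeys y : y \in keys -> y < l * m by case/mapP => i _ ->; apply: key_bound.
have uIx : uniq Ix.
  rewrite cat_uniq iota_uniq map_inj_uniq ?enum_uniq // andbT /=.
  apply/hasPn => y; rewrite mem_iota => /andP [hy _].
  by apply: contraTN hy => /lowkeys; rewrite -ltnNge => /ltn_addr ->.
have IxH y : y \in Ix -> y < size H.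
  rewrite szH mem_cat mem_iota => /orP [/lowkeys /ltn_addr -> //|/andP [_]]; lia.
have [T [subT szT hT]] := sorted_pick_rank sH uIx IxH.
exists T; split => //; first by rewrite szT size_cat size_map size_enum_ord size_iota; lia.
move=> i; rewrite /pos -hT // count_cat.
rewrite [X in _ + X](eq_in_count (a2 := pred0)) ?count_pred0 ?addn0; last first.
  move=> y; rewrite mem_iota => /andP [hy _] /=.
  by have := key_bound Hs Hm (a i); lia.
have -> : lexr (pullback so a) i = #|[set i' | key m so (a i') < key m so (a i)]|.
  by apply: eq_card => i'; rewrite !in_set (key_lt Hs Hm) (lexlt_pullback _ ai).
rewrite count_map cardsE cardE /enum_mem size_filter count_filter.
by congr nth; apply: eq_count => i' /=; rewrite andbT.
Qed.

Lemma homog_positions (C : Type) (col : seq nat -> C) c0 j (a : {ffun 'I_j -> V}) :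
  homog col K H c0 -> j <= K -> injective a ->
  exists T, col T = c0 /\ forall i, nth 0 T (lexr (pullback so a) i) = pos (a i).
Proof.
move=> hom jK ai; have [T [subT szT hT]] := pos_tuple jK ai.
by exists T; split => //; apply: hom.
Qed.

End Positions.

(** * Forbidden substructures up to added edges

   [N] contains a member of [F↑E] as an induced substructure exactly when some
   [F] in the family maps injectively into [N] preserving edges (not
   necessarily non-edges) and preserving and reflecting every L-relation. *)

Definition weak_embedding (L : finType) (k : L -> nat) (F N : GLstruct k)
    (g : 'I_(nv F) -> 'I_(nv N)) : Prop :=
  [/\ injective g, forall x y, edge F x y -> edge N (g x) (g y)
    & forall P a, (a \in rels F P) = (tcomp g a \in rels N P)].
Arguments weak_embedding {L k} F N g.

Section Forbidden.
Variables (L : finType) (k : L -> nat) (fam : GLstruct k -> Prop).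

Lemma upE_copy_weak_embedding (G N : GLstruct k) :
  upE fam G -> induced_copy G N ->
  exists F, fam F /\ exists g, weak_embedding F N g.
Proof.
move=> [_ [F [famF [e [Eed Erel]]]]] [f [finj fed frel]].
exists F; split => //; exists (fun v => f (cast_ord e v)); split.
- by move=> x y /finj /cast_ord_inj.
- by move=> x y /Eed; rewrite fed.
- by move=> P a; rewrite Erel frel tcomp_comp.
Qed.

(** Conversely, a weak embedding of a model [F] into a model [N] exhibits the
    structure on [V(F)] with the edges induced from [N] as a member of [F↑E]
    induced in [N]. *)
Lemma weak_embedding_upE_copy (F N : GLstruct k) g :
  fam F -> is_model F -> is_model N -> weak_embedding F N g ->
  exists G, upE fam G /\ induced_copy G N.
Proof.
move=> famF [_ _ Fcan] [Nsym Nirr _] [ginj ged grel].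
exists (GLS (nv F) (fun x y => edge N (g x) (g y)) (rels F)); split; last first.
  by exists g; split.
split; first by split => [x y|x|//] /=; rewrite ?Nirr // Nsym.
exists F; split => //; exists (erefl (nv F)); split => [x y|P a].
  by rewrite !cast_ord_id; apply: ged.
by rewrite tcomp_id.
Qed.

Lemma Forb_of_no_weak_embedding (N : GLstruct k) :
  is_model N -> (forall F g, fam F -> ~ weak_embedding F N g) -> Forb fam N.
Proof.
move=> Nmod noF; split=> // -[G [upG cG]].
by have [F [famF [g wg]]] := upE_copy_weak_embedding upG cG; apply: noF wg.
Qed.

Lemma Forb_no_weak_embedding (N F : GLstruct k) g :
  Forb fam N -> fam F -> is_model F -> ~ weak_embedding F N g.
Proof.
move=> [Nmod noG] famF Fmod wg; apply: noG.
exact: weak_embedding_upE_copy famF Fmod Nmod wg.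
Qed.

End Forbidden.

Lemma E_proper_weak_embedding (L : finType) (k : L -> nat) l (F N : GLstruct k)
    (Q : pattern k l) so g :
  E_proper N Q so -> weak_embedding F N g -> E_proper F Q (comp_so so g).
Proof.
move=> [Ns Nu Ne] [ginj ged grel]; split.
- exact: comp_split.
- move=> P a; rewrite /= grel Nu pullback_comp.
  split=> [[/tcomp_inj_inv ai]|[ai]] aQ //; split=> //; exact: tcomp_inj.
- by move=> x y /ged /Ne; rewrite !ffunE.
Qed.

(** * Lower bound: a pattern missing from the family gives complete multipartite
      [F↑E]-free models *)

Definition mod_order (n l : nat) (lpos : 0 < l) : sord 'I_n l :=
  ([ffun x : 'I_n => Ordinal (ltn_pmod x lpos)],
   [ffun p : 'I_n * 'I_n => (p.1 %% l == p.2 %% l) && (p.1 <= p.2)]).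

Lemma mod_order_split n l (lpos : 0 < l) : is_split (mod_order n lpos).
Proof.
split; rewrite /mod_order /=.
- by move=> v; rewrite ffunE /= eqxx leqnn.
- move=> v w; rewrite !ffunE /= => /andP [_ h1] /andP [_ h2]; apply: val_inj; apply/eqP.
  by rewrite eqn_leq h1 h2.
- move=> u v w; rewrite !ffunE /= => /andP [/eqP e1 h1] /andP [/eqP e2 h2].
  by rewrite e1 e2 eqxx (leq_trans h1 h2).
- move=> v w; rewrite !ffunE /= -val_eqE /= eq_sym.
  by case: eqP => //= _; exact: leq_total.
Qed.

Section PatternStructure.
Variables (L : finType) (k : L -> nat) (n l : nat) (lpos : 0 < l) (Q : pattern k l).

Definition pattern_structure : GLstruct k :=
  GLS n (Tnl n l) (fun P => [set a : {ffun 'I_(k P) -> 'I_n} |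
    injectiveb a && (pullback (mod_order n lpos) a \in Q P)]).

Lemma pattern_structure_model : is_model pattern_structure.
Proof.
split.
- by move=> x y; rewrite /= /Tnl eq_sym.
- by move=> x; rewrite /= /Tnl eqxx.
- by move=> P a; rewrite /= inE => /andP [/injectiveP].
Qed.

Lemma pattern_structure_E_proper : E_proper pattern_structure Q (mod_order n lpos).
Proof.
split; first exact: mod_order_split.
  move=> P a; rewrite /= inE; split=> [/andP [/injectiveP ai aQ] //|[ai aQ]].
  by rewrite aQ andbT; apply/injectiveP.
by move=> x y; rewrite /= /Tnl !ffunE -val_eqE.
Qed.

End PatternStructure.

Section LowerBound.
Variables (L : finType) (k : L -> nat) (fam : GLstruct k -> Prop).

(** If some [l]-pattern [Q] is not realised E-properly in the family, then for
    every [n] the [Q]-structure on [T_{n,l}] is [F↑E]-free: a weak embedding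
    of [F] would pull [mod_order] back to an E-proper [Q]-ordering of [F]. *)
Lemma chiA_of_not_chiB l : 0 < l -> ~ chiB fam l -> chiA fam l.
Proof.
move=> lpos nB.
have [Q [HQ nQ]] : exists Q : pattern k l, is_pattern Q /\ ~ chiE fam l Q.
  apply: NNPP => nex; apply: nB; split => // Q HQ.
  by apply: NNPP => nE; apply: nex; exists Q.
split => // n; exists (pattern_structure n lpos Q); split => //; last by exists id; split.
apply: Forb_of_no_weak_embedding (pattern_structure_model _ _ _) _ => F g famF wg.
apply: nQ; exists F; split => //; exists (comp_so (mod_order n lpos) g).
exact: E_proper_weak_embedding (pattern_structure_E_proper _ _ _) wg.
Qed.

Definition widen_so (V : finType) l (q : sord V l) : sord V l.+1 :=
  ([ffun v => widen_ord (leqnSn l) (q.1 v)], q.2).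

Lemma widen_so_split (V : finType) l (q : sord V l) :
  is_split (widen_so q) <-> is_split q.
Proof.
by split=> -[h1 h2 h3 h4]; split=> // v w; move: (h4 v w) => /=; rewrite !ffunE -!val_eqE.
Qed.

(** Every [l+1]-pattern restricts to an [l]-pattern through [widen_so]; an
    E-proper ordering for the restriction is E-proper for the original. *)
Lemma chiB_succ l : chiB fam l -> chiB fam l.+1.
Proof.
move=> [lpos HB]; split => // Q HQ.
pose Q' : pattern k l := fun P => [set q | widen_so q \in Q P].
have HQ' : is_pattern Q' by move=> P q; rewrite inE => /HQ /widen_so_split.
have [F [famF [so [Hs Hu He]]]] := HB Q' HQ'.
exists F; split => //; exists (widen_so so); split.
- exact/widen_so_split.
- move=> P a; rewrite Hu inE.
  suff -> : widen_so (pullback so a) = pullback (widen_so so) a by [].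
  by congr pair; apply/ffunP => x; rewrite !ffunE.
- by move=> x y /He; rewrite !ffunE -!val_eqE.
Qed.

Lemma chiB_mono l l' : chiB fam l -> l <= l' -> chiB fam l'.
Proof.
move=> hB /subnKC <-; elim: (l' - l) => [|d IH]; first by rewrite addn0.
by rewrite addnS; apply: chiB_succ.
Qed.

Definition lex_so (V : finType) l (q : sord V l) : sord V 1 :=
  ([ffun _ => ord0],
   [ffun p => (q.1 p.1 < q.1 p.2) || ((q.1 p.1 == q.1 p.2 :> nat) && q.2 p)]).

Lemma lex_so_split (V : finType) l (q : sord V l) : is_split q -> is_split (lex_so q).
Proof.
move=> [h1 h2 h3 h4]; split; rewrite /lex_so /=.
- by move=> v; rewrite ffunE ltnn eqxx h1.
- move=> v w; rewrite !ffunE /=.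
  by case: (ltngtP (q.1 v) (q.1 w)) => //= e; exact: h2.
- move=> u v w; rewrite !ffunE /=.
  case: (ltngtP (q.1 u) (q.1 v)) => /= e1; case: (ltngtP (q.1 v) (q.1 w)) => /= e2;
    rewrite ?eqxx ?andbT ?andbF //=; try lia.
  by rewrite e1 e2 ltnn eqxx /=; apply: h3.
- move=> v w; rewrite !ffunE /= eqxx.
  case: (ltngtP (q.1 v) (q.1 w)) => //= e.
  by rewrite h4; apply/eqP; apply: val_inj.
Qed.

Lemma lex_so_pullback (V : finType) l (so : sord V l) j (a : {ffun 'I_j -> V}) :
  lex_so (pullback so a) = pullback (lex_so so) a.
Proof. by congr pair; apply/ffunP => x; rewrite !ffunE. Qed.

(** If every [l]-pattern is realised, every 1-pattern [Q1] is realised up to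
    edges: realise the [l]-pattern of split orders whose lexicographic order
    lies in [Q1], then collapse the ordering. *)
Lemma U1_of_chiB l : chiB fam l -> forall Q1 : pattern k 1, is_pattern Q1 -> U 1 (Jfam fam) Q1.
Proof.
move=> [lpos HB] Q1 HQ1.
pose Q : pattern k l := fun P => [set q | is_splitb q && (lex_so q \in Q1 P)].
have HQ : is_pattern Q by move=> P q; rewrite inE => /andP [/is_splitP].
have [F [famF [so [Hs Hu He]]]] := HB Q HQ.
exists (J F); split; first by exists F.
exists (lex_so so); split; first exact: lex_so_split.
move=> P a; rewrite Hu inE -lex_so_pullback.
split=> [[ai /andP [_ ->]] //|[ai h]]; split=> //.
by rewrite h andbT; apply/is_splitP/pullback_split.
Qed.

End LowerBound.

(** * Upper bounds via Ramsey's theorem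

   A tuple of vertices of a split-ordered structure is described, up to
   isomorphism, by its colours and lexicographic ranks (its "code"); ranks
   are below [Kmax], a strict bound on all arities. *)

Section Codes.
Variables (L : finType) (k : L -> nat).

Definition Kmax : nat := (\max_(P : L) k P).+1.

Lemma arity_le_Kmax P : k P <= Kmax.
Proof. by apply: leq_trans (leqnSn _); apply: leq_bigmax. Qed.

Definition rank_code j l (q : sord 'I_j l) : {ffun 'I_j -> 'I_Kmax} :=
  [ffun i => inord (lexr q i)].

Lemma lexr_lt_Kmax l P (q : sord 'I_(k P) l) i : lexr q i < Kmax.
Proof. exact: leq_trans (lexr_lt q i) (arity_le_Kmax P). Qed.

Lemma colour_class_le n M l (so : sord 'I_n l) :
  n <= M -> forall c, #|[set u | so.1 u == c]| <= M.
Proof. by move=> nM c; apply: leq_trans (max_card _) _; rewrite card_ord. Qed.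

(** The injection of the vertex [x * l + c] of [T_{n,l}] with colour [c]. *)
Lemma block_index_lt l N0 x (c : 'I_l) : x < N0 -> x * l + c < (l * N0).+1.
Proof.
move=> xN; have := ltn_ord c; have := leq_mul (leqnn l) xN; nia.
Qed.

Lemma block_index_mod l x (c : 'I_l) : (x * l + c) %% l = c.
Proof. by rewrite modnMDl modn_small. Qed.

Lemma block_index_inj l x x' (c c' : 'I_l) :
  x * l + c = x' * l + c' -> x = x' /\ c = c'.
Proof.
move=> e; have cc' : c = c'.
  by apply: val_inj; rewrite /= -(block_index_mod x c) e block_index_mod.
split=> //; have lpos : 0 < l by apply: leq_ltn_trans (ltn_ord c).
by move: e; rewrite cc' => /addIn /eqP; rewrite eqn_pmul2r // => /eqP.
Qed.

Definition discrete_so (V : finType) n (c : V -> 'I_n) : sord V n :=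
  ([ffun u => c u], [ffun p => p.1 == p.2]).

Lemma discrete_so_split (V : finType) n (c : V -> 'I_n) :
  injective c -> is_split (discrete_so c).
Proof.
move=> cinj; split; rewrite /discrete_so /=.
- by move=> v; rewrite ffunE eqxx.
- by move=> v w; rewrite ffunE => /eqP.
- by move=> u v w; rewrite !ffunE /= => /eqP ->.
- by move=> v w; rewrite !ffunE /= (inj_eq cinj) eq_sym orbb.
Qed.

End Codes.

(** Colour each K-subsequence [T] of [[0, N0)] by which codes, read through
   the [l] blocks of [T_{l N0 + 1, l}], give tuples related in [N]; on a
   homogeneous [H] of colour [c0], any [F] with an E-proper ordering for the
   pattern "code in [c0]" embeds weakly into [N] at the positions [pos]. *)
Section UpperBound.
Variables (L : finType) (k : L -> nat) (l : nat).

Definition colour := {dffun forall P : L, {set {ffun 'I_(k P) -> 'I_l * 'I_(Kmax k)}}}.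

Definition code_pattern (c0 : colour) : pattern k l := fun P =>
  [set q | is_splitb q && ([ffun i => (q.1 i, rank_code k q i)] \in c0 P)].

Lemma code_pattern_is_pattern c0 : is_pattern (code_pattern c0).
Proof. by move=> P q; rewrite inE => /andP [/is_splitP]. Qed.

Definition vertex_colouring (N : GLstruct k) (vert : 'I_l -> nat -> 'I_(nv N))
    (T : seq nat) : colour :=
  [ffun P => [set b : {ffun 'I_(k P) -> 'I_l * 'I_(Kmax k)} |
    [ffun i => vert (b i).1 (nth 0 T (b i).2)] \in rels N P]].

Lemma homogeneous_weak_embedding (N F : GLstruct k) (vert : 'I_l -> nat -> 'I_(nv N))
    M (H : seq nat) c0 (so : sord 'I_(nv F) l) :
  (forall c c' x x', x \in H -> x' \in H -> vert c x = vert c' x' -> c = c' /\ x = x') ->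
  (forall c c' x x', x \in H -> x' \in H -> c != c' -> edge N (vert c x) (vert c' x')) ->
  is_canonical N -> is_canonical F ->
  sorted ltn H -> size H = l * M + Kmax k -> homog (vertex_colouring vert) (Kmax k) H c0 ->
  nv F <= M -> E_proper F (code_pattern c0) so ->
  weak_embedding F N (fun u => vert (so.1 u) (pos M so H u)).
Proof.
move=> vinj vedge Ncan Fcan sH szH hom FM [Hs Hu He].
have Hm := colour_class_le so FM.
have posH := pos_in_H Hs Hm szH.
split.
- move=> u v e; have [_] := vinj _ _ _ _ (posH u) (posH v) e.
  exact: (pos_inj Hs Hm sH szH).
- by move=> x y /He; apply: vedge.
move=> P a; case: (boolP (injectiveb a)) => [/injectiveP ai|nai]; last first.
  apply/idP/idP => [/Fcan|/Ncan /tcomp_inj_inv] /injectiveP; by rewrite (negbTE nai).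
have [T [colT hT]] := homog_positions Hs Hm sH szH hom (arity_le_Kmax k P) ai.
have codeN : (pullback so a \in code_pattern c0 P) =
    (tcomp (fun u => vert (so.1 u) (pos M so H u)) a \in rels N P).
  rewrite inE (introT (is_splitP _) (pullback_split ai Hs)) -colT !ffunE inE.
  by congr (_ \in rels N P); apply/ffunP => i; rewrite !ffunE /= inordK ?hT ?lexr_lt_Kmax.
rewrite -codeN; apply/idP/idP => [/(Hu P a) [] //|aQ].
exact/(Hu P a).
Qed.

End UpperBound.

(** Colour each K-subsequence [T] of [[0, N0)] by which rank codes, read as
   discrete orders with colours from [T], lie in a given [n]-pattern [Q]; on
   a homogeneous [H] of colour [c0], a structure [F] that is uniform for the
   1-pattern "rank code in [c0]" is E-properly [Q]-ordered by giving every
   vertex its own colour [pos]. *)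
Section RankPatterns.
Variables (L : finType) (k : L -> nat).

Definition rank_colour := {dffun forall P : L, {set {ffun 'I_(k P) -> 'I_(Kmax k)}}}.

Definition rank_pattern (c0 : rank_colour) : pattern k 1 := fun P =>
  [set q | is_splitb q && (rank_code k q \in c0 P)].

Lemma rank_pattern_is_pattern c0 : is_pattern (rank_pattern c0).
Proof. by move=> P q; rewrite inE => /andP [/is_splitP]. Qed.

Definition rank_colouring n (Q : pattern k n.+1) (T : seq nat) : rank_colour :=
  [ffun P => [set b : {ffun 'I_(k P) -> 'I_(Kmax k)} |
    discrete_so (fun i => inord (nth 0 T (b i)) : 'I_n.+1) \in Q P]].

Lemma homogeneous_E_proper n (Q : pattern k n.+1) (F : GLstruct k) M (H : seq nat) c0
    (so : sord 'I_(nv F) 1) :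
  (forall x, x \in H -> x < n.+1) -> is_model F ->
  sorted ltn H -> size H = 1 * M + Kmax k -> homog (rank_colouring Q) (Kmax k) H c0 ->
  nv F <= M -> is_split so -> uniform (J F) (rank_pattern c0) so ->
  E_proper F Q (discrete_so (fun u => inord (pos M so H u) : 'I_n.+1)).
Proof.
move=> Hn [_ Firr _] sH szH hom FM Hs Hu.
have Hm := colour_class_le so FM.
have posK u : (inord (pos M so H u) : 'I_n.+1) = pos M so H u :> nat.
  by rewrite inordK // Hn // (pos_in_H Hs Hm szH).
have colour_inj : injective (fun u => inord (pos M so H u) : 'I_n.+1).
  by move=> u v /(congr1 val); rewrite /= !posK => /(pos_inj Hs Hm sH szH).
split; first exact: discrete_so_split.
  move=> P a.
  have codeQ : injective a -> (pullback so a \in rank_pattern c0 P) =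
      (pullback (discrete_so (fun u => inord (pos M so H u) : 'I_n.+1)) a \in Q P).
    move=> ai; have [T [colT hT]] := homog_positions Hs Hm sH szH hom (arity_le_Kmax k P) ai.
    rewrite inE (introT (is_splitP _) (pullback_split ai Hs)) -colT !ffunE inE.
    congr (_ \in Q P); congr pair; apply/ffunP.
      by move=> i; rewrite !ffunE /= inordK ?hT ?lexr_lt_Kmax.
    by move=> p; rewrite !ffunE /= (inj_eq ai).
  split=> [/(Hu P a) [ai aQ]|[ai aQ]]; first by rewrite -codeQ.
  by apply/(Hu P a); rewrite codeQ.
by move=> x y exy; rewrite !ffunE (inj_eq colour_inj); apply: contraTneq exy => ->; rewrite Firr.
Qed.

End RankPatterns.

Section Bounds.
Variables (L : finType) (k : L -> nat) (fam : GLstruct k -> Prop).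
Hypothesis Hfam : forall F, fam F -> is_model F.

(** If every [l]-pattern is realised E-properly in the family, then no
    [F↑E]-free model contains [T_{n,l}] for large [n]: by finiteness all code
    patterns are realised on at most [M] vertices, Ramsey gives a homogeneous
    set of block indices, and the realisation for its colour embeds weakly. *)
Lemma not_chiA_of_chiB l : chiB fam l -> ~ chiA fam l.
Proof.
move=> [lpos HB] [_ HA].
have [M HM] : exists M, forall c0 : colour k l, exists F, [/\ fam F, nv F <= M &
    exists so, E_proper F (code_pattern c0) so].
  apply: finite_common_bound => [c N N' le [F [f1 f2 f3]]|c0].
    by exists F; split => //; exact: leq_trans f2 le.
  have [F [famF [so Hso]]] := HB _ (@code_pattern_is_pattern _ _ _ c0).
  by exists (nv F), F; split => //; exists so.
have [N0 HN0] := ramsey (Kmax k) (colour k l) (l * M + Kmax k).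
have [N [FN _ [h [hinj hed]]]] := HA (l * N0).+1.
pose vert (c : 'I_l) x : 'I_(nv N) := h (inord (x * l + c)).
have [c0 [H [subH szH hom]]] :=
  HN0 (iota 0 N0) (vertex_colouring vert) (eq_leq (esym (size_iota 0 N0))).
have [F [famF FM [so Eso]]] := HM c0.
have HN x : x \in H -> x < N0 by move/(mem_subseq subH); rewrite mem_iota.
have blockK x (c : 'I_l) :
    x \in H -> (inord (x * l + c) : 'I_(l * N0).+1) = x * l + c :> nat.
  by move/HN => xN; rewrite inordK //; apply: block_index_lt.
apply: (Forb_no_weak_embedding FN famF (Hfam famF)).
have [[_ _ Ncan] _] := FN; have [_ _ Fcan] := Hfam famF.
apply: (homogeneous_weak_embedding _ _ Ncan Fcan _ szH hom FM Eso).
- move=> c c' x x' xH x'H /hinj /(congr1 val); rewrite /= !blockK //.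
  by case/block_index_inj.
- move=> c c' x x' xH x'H ne; apply: hed.
  by rewrite /Tnl !blockK // !block_index_mod.
- exact: (subseq_sorted ltn_trans subH (iota_ltn_sorted 0 N0)).
Qed.

(** If every 1-pattern is realised up to edges, then all [(N0+1)]-patterns
    are realised E-properly, where [N0] is the Ramsey number for colouring
    K-subsets by rank colours with homogeneous sets of size [M + Kmax]. *)
Lemma chiB_of_U1 :
  (forall Q1 : pattern k 1, is_pattern Q1 -> U 1 (Jfam fam) Q1) -> exists l, chiB fam l.
Proof.
move=> HU.
have [M HM] : exists M, forall c0 : rank_colour k, exists F, [/\ fam F, nv F <= M &
    exists so, is_split so /\ uniform (J F) (rank_pattern c0) so].
  apply: finite_common_bound => [c N N' le [F [f1 f2 f3]]|c0].
    by exists F; split => //; exact: leq_trans f2 le.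
  have [_ [[F [famF ->]] [so Hso]]] := HU _ (@rank_pattern_is_pattern _ _ c0).
  by exists (nv F), F; split => //; exists so.
have [N0 HN0] := ramsey (Kmax k) (rank_colour k) (1 * M + Kmax k).
exists N0.+1; split => // Q _.
have [c0 [H [subH szH hom]]] :=
  HN0 (iota 0 N0) (rank_colouring Q) (eq_leq (esym (size_iota 0 N0))).
have [F [famF FM [so [Hs Hu]]]] := HM c0.
exists F; split => //; eexists.
apply: (homogeneous_E_proper _ (Hfam famF) _ szH hom FM Hs Hu).
- by move=> x /(mem_subseq subH); rewrite mem_iota add0n => /ltnW.
- exact: (subseq_sorted ltn_trans subH (iota_ltn_sorted 0 N0)).
Qed.

Lemma chiA_iff_not_chiB l : chiA fam l <-> 0 < l /\ ~ chiB fam l.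
Proof.
split=> [hA|[lpos nB]]; last exact: chiA_of_not_chiB.
by split; [case: hA | move=> hB; exact: not_chiA_of_chiB hB hA].
Qed.

End Bounds.

(** [sup_succ_val A x]: [x] is [sup (A ∪ {0}) + 1], with [None] standing for ∞. *)
Definition sup_succ_val (A : nat -> Prop) (x : option nat) : Prop :=
  match x with
  | Some m => exists s, [/\ m = s.+1, (forall l, A l -> l <= s) & (s = 0 \/ A s)]
  | None => forall s, exists l, A l /\ s < l
  end.

Lemma sup_succ_inf (A B : nat -> Prop) :
  (forall l, A l <-> 0 < l /\ ~ B l) -> (forall l l', B l -> l <= l' -> B l') ->
  (forall l, B l -> 0 < l) -> forall x, sup_succ_val A x <-> inf_val B x.
Proof.
move=> AB Bmono Bpos [m|]; split => /=.
- move=> [s [-> ub hs]]; split.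
    apply: NNPP => nB; have := ub _ ((AB _).2 (conj (ltn0Sn s) nB)); by rewrite ltnn.
  move=> l hl; rewrite leqNgt; apply/negP => lt.
  case: hs => [s0|/AB [_ nBs]]; first by have := Bpos _ hl; lia.
  by apply: nBs; apply: Bmono hl _.
- move=> [hB hmin]; case: m hB hmin => [/Bpos //|s] hB hmin.
  exists s; split => // [l /AB [_ nBl]|].
    by rewrite leqNgt; apply/negP => lt; apply: nBl; apply: Bmono hB lt.
  case: s hB hmin => [|s] hB hmin; [by left | right; apply/AB; split => // nB].
  by have := hmin _ nB; rewrite ltnn.
- move=> H l hl; have [l' [/AB [_ nB] lt]] := H l.
  by apply: nB; apply: Bmono hl (ltnW lt).
- by move=> hn s; exists s.+1; split => //; apply/AB; split => //; apply: hn.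
Qed.

Theorem theorem3p6 (L : finType) (k : L -> nat) (fam : GLstruct k -> Prop)
  (Hfam : forall F, fam F -> is_model F) :
  (forall x : option nat, chi_val fam x <-> inf_val (chiB fam) x) /\
  ((exists m, chi_val fam (Some m)) <->
     (forall Q : pattern k 1, is_pattern Q -> U 1 (Jfam fam) Q)).
Proof.
have duality x : chi_val fam x <-> inf_val (chiB fam) x.
  apply: (sup_succ_inf (chiA_iff_not_chiB Hfam)) => [l l'|l []] //.
  exact: chiB_mono.
split=> //; split => [[m /duality [hB _]]|hU]; first exact: U1_of_chiB hB.
have [l hB] := chiB_of_U1 Hfam hU.
have [m [hm hmin]] := least_witness hB.
by exists m; apply/duality.
Qed.
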